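(* Let $n\ge1$ and let $X_1,\dots,X_n,Y_1,\dots,Y_n$ be algebraically independent indeterminates. Then $$\det_{1\le i,j\le n}\left(X_i^j-Y_i^j\right)=\sum_{\sigma\in S_n}\operatorname{sgn}(\sigma)\prod_{1\le i\le j\le n}\left(X_{\sigma(j)}-Y_{\sigma(i)}\right).$$ *)

From HB Require Import structures.
From mathcomp Require Import all_boot all_order all_algebra all_fingroup.
From mathcomp Require Import mpoly.
Set Implicit Arguments. Unset Strict Implicit. Unset Printing Implicit Defensive.
Import GRing.Theory.
Local Open Scope ring_scope.

Definition Xv (R : comRingType) (n : nat) (i : 'I_n) : {mpoly R[n + n]} :=
  'X_(lshift n i).
Definition Yv (R : comRingType) (n : nat) (i : 'I_n) : {mpoly R[n + n]} :=
  'X_(rshift n i).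

From HB Require Import structures.
From mathcomp Require Import all_boot all_order all_algebra all_fingroup.
From mathcomp Require Import mpoly.
Import GRing.Theory.
Local Open Scope ring_scope.

(* The identity holds for arbitrary elements x_1..x_n, y_1..y_n of any
   commutative ring, and we prove it in that generality; the theorem is the
   instance x = X, y = Y in the polynomial ring {mpoly R[n + n]}.

   Write L_n(x, y) for the determinant and R_n(x, y) for the signed sum.
   Both satisfy the same recursion in n, with L_0 = R_0 = 1:
     F_(m+1)(x, y) = sum_i (-1)^(i+m) * prod_a (x_i - y_a) * F_m(x', y'),
   where x', y' omit the i-th entries.
   - For R this comes from sorting permutations s by the value J = s(m+1):
     the column j = m+1 of the triangular product is prod_a (x_J - y_a), and
     s is the lift of a permutation of the remaining m indices.
   - For L, with P(t) = prod_a (t - y_a), monic of degree m+1 and vanishing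
     at every y_i, we get P(x_i) = P(x_i) - P(y_i) = sum_k P_(k+1) (x_i^(k+1)
     - y_i^(k+1)), a combination of the columns of the matrix whose last
     coefficient is 1; expanding along the last column gives the recursion. *)

Section TriangularProductIdentity.
Variable R : comRingType.

Definition det_powdiff {n} (x y : 'I_n -> R) : R :=
  \det (\matrix_(i < n, j < n) (x i ^+ j.+1 - y i ^+ j.+1)).

Definition perm_triangle_sum {n} (x y : 'I_n -> R) : R :=
  \sum_(s : 'S_n) (-1) ^+ s *
      \prod_(i < n) \prod_(j < n | (i <= j)%N) (x (s j) - y (s i)).

Lemma sum_perm_pinned n (G : 'S_n.+1 -> R) (i0 j0 : 'I_n.+1) :
  \sum_(s : 'S_n.+1 | s i0 == j0) G s = \sum_(t : 'S_n) G (lift_perm i0 j0 t).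
Proof.
rewrite (reindex (lift_perm i0 j0)); last first.
  (* the inverse map restricts s to the complements of i0 and s i0 *)
  pose restr i (s : 'S_n.+1) k := odflt k (unlift (s i) (s (lift i k))).
  have restrK i (s : 'S_n.+1) k : lift (s i) (restr i s k) = s (lift i k).
    rewrite /restr; have := neq_lift i k.
    by rewrite -(can_eq (permK s)) => /unlift_some[] ? ? ->.
  have restr_inj s : injective (restr i0 s).
    apply: can_inj (restr (s i0) s^-1%g) _ => k.
    by rewrite {1}/restr restrK !permK liftK.
  exists (fun s => perm (restr_inj s)) => [t _ | s /eqP si0].
    by apply/permP => k; rewrite permE /restr lift_perm_lift lift_perm_id liftK.
  apply/permP => k; case: (unliftP i0 k) => [k'|] ->; rewrite ?lift_perm_id //.
  by rewrite lift_perm_lift -si0 permE restrK.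
by apply: eq_bigl => t; rewrite lift_perm_id eqxx.
Qed.

Lemma sign_lift_perm_max m (J : 'I_m.+1) (t : 'S_m) :
  (-1) ^+ lift_perm ord_max J t = (-1) ^+ (J + m) * (-1) ^+ t :> R.
Proof.
by rewrite odd_lift_perm !signr_addb !signr_odd exprD /= [(-1) ^+ m * _]mulrC.
Qed.

Lemma prod_triangle_last m (f : 'I_m.+1 -> 'I_m.+1 -> R) :
  \prod_(i < m.+1) \prod_(j < m.+1 | (i <= j)%N) f i j
  = \prod_(i < m.+1) f i ord_max *
    \prod_(i < m) \prod_(j < m | (i <= j)%N) f (lift ord_max i) (lift ord_max j).
Proof.
have widenE k : widen_ord (leqnSn m) k = lift ord_max k.
  by apply: val_inj; rewrite [RHS]lift_max.
rewrite big_ord_recr /= (big_pred1 ord_max); last first.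
  by move=> j /=; rewrite -val_eqE /= eqn_leq leq_ord.
under eq_bigr => i _ do
  rewrite big_mkcond big_ord_recr /= -big_mkcond /= (ltnW (ltn_ord i)).
rewrite big_split /= -mulrA [in RHS]big_ord_recr /= mulrC; congr (_ * _).
by apply: eq_bigr => i _; apply: eq_bigr => j _; rewrite !widenE.
Qed.

Lemma perm_triangle_sum_step m (x y : 'I_m.+1 -> R) :
  perm_triangle_sum x y = \sum_(J < m.+1) (-1) ^+ (J + m) *
    (\prod_a (x J - y a)) * perm_triangle_sum (x \o lift J) (y \o lift J).
Proof.
rewrite /perm_triangle_sum (partition_big (fun s : 'S_m.+1 => s ord_max) predT) //=.
apply: eq_bigr => J _; rewrite sum_perm_pinned big_distrr /=.
apply: eq_bigr => t _; set s := lift_perm ord_max J t.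
have last_col : \prod_(i < m.+1) (x (s ord_max) - y (s i)) = \prod_a (x J - y a).
  by rewrite [RHS](reindex_inj (@perm_inj _ s)) /s lift_perm_id.
rewrite sign_lift_perm_max prod_triangle_last last_col.
rewrite -!mulrA; congr (_ * _); rewrite [in RHS]mulrCA; congr (_ * (_ * _)).
by apply: eq_bigr => i _; apply: eq_bigr => j _; rewrite /s !lift_perm_lift.
Qed.

(* Expanding along the last column a combination of all the columns with
   coefficients c yields c_last * det A (Cramer's rule). *)
Lemma det_last_col_comb m (A : 'M[R]_m.+1) (c : 'I_m.+1 -> R) :
  \sum_i (\sum_k c k * A i k) * cofactor A i ord_max = c ord_max * \det A.
Proof.
have adjE k : \sum_i A i k * cofactor A i ord_max = \det A *+ (ord_max == k).
  have /matrixP/(_ ord_max k) := mul_adj_mx A; rewrite !mxE => <-.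
  by apply: eq_bigr => i _; rewrite !mxE mulrC.
under eq_bigr do rewrite big_distrl.
rewrite exchange_big /=.
under eq_bigr do (under eq_bigr do rewrite -mulrA; rewrite -big_distrr /= adjE).
rewrite (bigD1 ord_max) //= eqxx mulr1n big1 ?addr0 //.
by move=> k /negPf nk; rewrite eq_sym nk mulr0n mulr0.
Qed.

Definition vanishing_poly {n} (y : 'I_n -> R) : {poly R} :=
  \prod_(a < n) ('X - (y a)%:P).

Lemma size_vanishing_poly n (y : 'I_n -> R) : size (vanishing_poly y) = n.+1.
Proof.
by rewrite size_prod_XsubC [index_enum _]unlock -enumT -cardT card_ord.
Qed.

Lemma vanishing_poly_lead n (y : 'I_n -> R) : (vanishing_poly y)`_n = 1.
Proof.
have := lead_coef_prod_XsubC (index_enum 'I_n) predT y.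
by rewrite lead_coefE size_vanishing_poly.
Qed.

(* prod_a (x_i - y_a) is P(x_i) - P(y_i) for P the vanishing polynomial of y,
   hence a combination of the differences of powers of x_i and y_i. *)
Lemma prod_sub_powdiff m (x y : 'I_m.+1 -> R) (i : 'I_m.+1) :
  \prod_a (x i - y a) =
  \sum_(k < m.+1) (vanishing_poly y)`_k.+1 * (x i ^+ k.+1 - y i ^+ k.+1).
Proof.
set P := vanishing_poly y.
have hornerP t : P.[t] = \prod_a (t - y a).
  by rewrite horner_prod; apply: eq_bigr => a _; rewrite hornerXsubC.
have Pyi : P.[y i] = 0 by rewrite hornerP (bigD1 i) //= subrr mul0r.
have -> : \prod_a (x i - y a) = P.[x i] - P.[y i] by rewrite Pyi subr0 hornerP.
rewrite !horner_coef -sumrB size_vanishing_poly big_ord_recl /= !expr0.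
by rewrite subrr add0r; apply: eq_bigr => k _; rewrite mulrBr.
Qed.

Lemma det_powdiff_step m (x y : 'I_m.+1 -> R) :
  det_powdiff x y = \sum_(i < m.+1) (-1) ^+ (i + m) *
    (\prod_a (x i - y a)) * det_powdiff (x \o lift i) (y \o lift i).
Proof.
set A := \matrix_(i < m.+1, j < m.+1) (x i ^+ j.+1 - y i ^+ j.+1).
have := det_last_col_comb _ A (fun k : 'I_m.+1 => (vanishing_poly y)`_k.+1).
rewrite vanishing_poly_lead mul1r /det_powdiff -/A => <-.
apply: eq_bigr => i _; rewrite prod_sub_powdiff /cofactor mulrCA mulrA.
have -> : row' i (col' ord_max A) =
    \matrix_(k, l) ((x \o lift i) k ^+ l.+1 - (y \o lift i) k ^+ l.+1).
  by apply/matrixP => k l; rewrite !mxE lift_max.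
have -> : \sum_(k < m.+1) (vanishing_poly y)`_k.+1 * A i k =
    \sum_(k < m.+1) (vanishing_poly y)`_k.+1 * (x i ^+ k.+1 - y i ^+ k.+1).
  by apply: eq_bigr => k _; rewrite mxE.
by [].
Qed.

Lemma det_powdiff_triangle n (x y : 'I_n -> R) :
  det_powdiff x y = perm_triangle_sum x y.
Proof.
elim: n x y => [|m IH] x y.
  rewrite /det_powdiff det_mx00 /perm_triangle_sum (big_pred1 1%g); last first.
    by move=> s /=; apply/esym/eqP/permP => -[].
  by rewrite odd_perm1 expr0 big_ord0 mul1r.
rewrite det_powdiff_step perm_triangle_sum_step.
by apply: eq_bigr => i _; rewrite IH.
Qed.

End TriangularProductIdentity.

Theorem mainTheorem10 (R : comRingType) (n : nat) (hn : (1 <= n)%N) :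
  \det (\matrix_(i < n, j < n) (Xv R i ^+ j.+1 - Yv R i ^+ j.+1))
  = \sum_(s : 'S_n) (-1) ^+ s *
      \prod_(i < n) \prod_(j < n | (i <= j)%N) (Xv R (s j) - Yv R (s i)).
Proof. exact: (@det_powdiff_triangle _ n (@Xv R n) (@Yv R n)). Qed.
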